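(* Let $\mathbb{X}$ be a real Banach space such that $\operatorname{Sm}\mathbb{X}$ is a dense $G_\delta$ subset of $\mathbb{X}$. If a bounded linear operator $T:\mathbb{X}\to\mathbb{X}$ preserves Birkhoff–James orthogonality at each point of $\operatorname{Sm}\mathbb{X}$, then $T$ is a scalar multiple of an isometry, i.e. there is $\lambda\ge0$ with $\|Tx\|=\lambda\|x\|$ for all $x\in\mathbb{X}$. (Equivalently, $\operatorname{Sm}\mathbb{X}\cap S_{\mathbb{X}}$ is a $\mathcal{K}$-set.)
   Context: $u\perp_B v$ means $\|u+\lambda v\|\ge\|u\|$ for all real $\lambda$. $T$ preserves Birkhoff–James orthogonality at $x$ if $x\perp_B v$ implies $Tx\perp_B Tv$ for all $v$. For non-zero $z$, $J(z)=\{f\in\mathbb{X}^*:\|f\|=1,\ f(z)=\|z\|\}$; $z$ is smooth if $J(z)$ is a singleton; $\operatorname{Sm}\mathbb{X}$ is the set of smooth points. $S_{\mathbb{X}}$ is the unit sphere. A set $A\subseteq S_{\mathbb{X}}$ is a $\mathcal{K}$-set if every bounded linear $T:\mathbb{X}\to\mathbb{X}$ preserving Birkhoff–James orthogonality at each point of $A$ is a scalar multiple of an isometry. *)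

From HB Require Import structures.
From mathcomp Require Import all_boot all_order all_algebra.
From mathcomp Require Import all_classical all_reals all_analysis borel_hierarchy.
Set Implicit Arguments. Unset Strict Implicit. Unset Printing Implicit Defensive.
Import Order.TTheory GRing.Theory Num.Theory.
Import numFieldNormedType.Exports.
Local Open Scope classical_set_scope.
Local Open Scope ring_scope.

Section BJ.
Context {R : realType} {X : normedModType R}.

Definition BJorth (u v : X) : Prop := forall lam : R, `|u| <= `|u + lam *: v|.

Definition preserves_BJ_at (T : X -> X) (x : X) : Prop :=
  forall v : X, BJorth x v -> BJorth (T x) (T v).

Definition is_linear_functional (f : X -> R) : Prop :=
  forall (a : R) (x y : X), f (a *: x + y) = a * f x + f y.

Definition dual_norm (f : X -> R) : R :=
  sup [set `|f x| | x in [set x : X | `|x| <= 1]].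

Definition in_dual (f : X -> R) : Prop := is_linear_functional f /\ continuous f.

Definition Jset (z : X) : set (X -> R) :=
  [set f | in_dual f /\ dual_norm f = 1 /\ f z = `|z|].

Definition smooth (z : X) : Prop := z != 0 /\ exists f : X -> R, Jset z = [set f].

Definition Sm : set X := [set z | smooth z].

End BJ.

From HB Require Import structures.
From mathcomp Require Import all_boot all_order all_algebra.
From mathcomp Require Import all_classical all_reals all_analysis borel_hierarchy.
From mathcomp Require Import lra.
Set Implicit Arguments. Unset Strict Implicit. Unset Printing Implicit Defensive.
Import Order.TTheory GRing.Theory Num.Theory.
Import numFieldNormedType.Exports.
Local Open Scope classical_set_scope.
Local Open Scope ring_scope.

(* Write h u = |T u| / |u|. If f is a norming functional of a point x at which
   T preserves Birkhoff-James orthogonality, then every v in ker f is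
   BJ-orthogonal to x, hence T v is BJ-orthogonal to T x, and this yields
   |T x| f u <= |x| |T u| for all u. Along a chain of smooth points shadowing a
   segment [a, b] that avoids 0, this inequality lets h drop from one node to
   the next only by the defect |z'| - f z', and these defects telescope to an
   arbitrarily small quantity; continuity of h then gives h a <= h b. A segment
   through 0 joins proportional vectors, where h agrees by homogeneity. Hence h
   is constant on X \ {0}. *)

Lemma chain_lower_bound (R : realFieldType) (h q : nat -> R) (n : nat) :
  (forall i, 0 <= h i) -> (forall i, 0 <= q i) ->
  (forall i, (i < n)%N -> h i * (1 - q i) <= h i.+1) ->
  h 0%N * (1 - \sum_(i < n) q i) <= h n.
Proof.
move=> h_ge0 q_ge0; elim: n => [|n IH] step; first by rewrite big_ord0 subr0 mulr1.
rewrite big_ord_recr /=.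
have {}IH := IH (fun i lt_in => step i (ltnW lt_in)).
have hn := step n (ltnSn n).
set p := \sum_(i < n) q i in IH *.
have p_ge0 : 0 <= p by rewrite sumr_ge0.
have := h_ge0 0%N; have := h_ge0 n.+1; have := q_ge0 n.
have [pq_ge1|pq_lt1] := leP 1 (p + q n) => qn0 hn1 h00.
  by apply: le_trans (h_ge0 n.+1); rewrite mulr_ge0_le0 //; lra.
have : h 0%N * (1 - p) * (1 - q n) <= h n * (1 - q n) by apply: ler_wpM2r; lra.
have : 0 <= h 0%N * p * q n by rewrite !mulr_ge0.
lra.
Qed.

Lemma exists_pos_le3 (R : realFieldType) (x y z : R) : 0 < x -> 0 < y -> 0 < z ->
  exists2 e, 0 < e & [/\ e <= x, e <= y & e <= z].
Proof.
move=> x_gt0 y_gt0 z_gt0; exists (Order.min x (Order.min y z)).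
  by rewrite !lt_min x_gt0 y_gt0 z_gt0.
by split; rewrite !ge_min lexx ?orbT.
Qed.

Lemma dense_approx {R : realType} {X : normedModType R} (S : set X) :
  dense S -> forall (y : X) (e : R), 0 < e -> exists z, S z /\ `|y - z| < e.
Proof.
move=> S_dense y e e_gt0.
have [|z [yz Sz]] := S_dense (ball y e) _ (ball_open y e); first by exists y; exact: ballxx.
by exists z; split => //; move: yz; rewrite -ball_normE.
Qed.

Section LinearFunctional.
Context {R : realType} {X : normedModType R} (F : X -> R).
Hypothesis linF : is_linear_functional F.

Lemma linear_functionalD u v : F (u + v) = F u + F v.
Proof. by rewrite -[u]scale1r linF mul1r scale1r. Qed.

Lemma linear_functional0 : F 0 = 0.
Proof. by have := linear_functionalD 0 0; rewrite addr0 => e; lra. Qed.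

Lemma linear_functionalZ a u : F (a *: u) = a * F u.
Proof. by have := linF a u 0; rewrite !addr0 linear_functional0 addr0. Qed.

Lemma linear_functionalB u v : F (u - v) = F u - F v.
Proof. by rewrite linear_functionalD -scaleN1r linear_functionalZ mulN1r. Qed.

End LinearFunctional.

Section NormingFunctional.
Context {R : realType} {X : normedModType R}.

Definition norming (F : X -> R) (x : X) : Prop :=
  [/\ is_linear_functional F, forall u, F u <= `|u| & F x = `|x|].

Lemma norming_ge F x : norming F x -> forall u, - `|u| <= F u.
Proof.
case=> linF Fle _ u; have Fu := Fle (- u).
by rewrite normrN -scaleN1r linear_functionalZ // in Fu; lra.
Qed.

Lemma norming_gap_le F y v w D rho :
  norming F y -> `|w - y - D| <= rho -> `|y - v - D| <= rho ->
  `|w| - F w <= (`|w| - `|y|) - (`|y| - `|v|) + 2 * rho.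
Proof.
move=> Fy_norming le_w le_v; have [linF Fle Fy] := Fy_norming.
have := norming_ge Fy_norming (w - y - D); have := Fle (y - v - D); have := Fle v.
rewrite !(linear_functionalB linF) Fy; lra.
Qed.

Definition ratio_supported (g : X -> R) (x : X) : Prop :=
  exists2 F, norming F x & forall u, g x * F u <= `|x| * g u.

Lemma ratio_step (g : X -> R) F x w m :
  (forall u, 0 <= g u) -> norming F x -> (forall u, g x * F u <= `|x| * g u) ->
  0 < `|x| -> 0 < m -> m <= `|w| ->
  g x / `|x| * (1 - (`|w| - F w) / m) <= g w / `|w|.
Proof.
move=> g_ge0 [_ Fle _] gF x_gt0 m_gt0 m_le.
have w_gt0 : 0 < `|w| by exact: lt_le_trans m_le.
set k := g x / `|x|; set r := (`|w| - F w) / m.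
have k_ge0 : 0 <= k by rewrite divr_ge0.
have r_ge0 : 0 <= r by rewrite divr_ge0 ?subr_ge0 ?Fle ?ltW.
have kF : k * F w <= g w.
  by rewrite /k mulrAC ler_pdivrMr // [g w * _]mulrC.
have Fw : F w = `|w| - r * m by rewrite /r divfK ?gt_eqF //; lra.
have : k * (r * m) <= k * (r * `|w|) by rewrite ler_wpM2l // ler_wpM2l.
rewrite ler_pdivlMr //; rewrite Fw in kF; lra.
Qed.

Lemma ratio_chain (g : X -> R) (z : nat -> X) (D : X) (rho m : R) (n : nat) :
  (forall u, 0 <= g u) -> 0 < m ->
  (forall i, (i <= n.+1)%N -> m <= `|z i|) ->
  (forall i, ratio_supported g (z i)) ->
  (forall i, (i <= n)%N -> `|z i.+1 - z i - D| <= rho) ->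
  g (z 1%N) / `|z 1%N| * (1 - 2 * (`|D| + n.+1%:R * rho) / m)
    <= g (z n.+1) / `|z n.+1|.
Proof.
move=> g_ge0 m_gt0 m_le z_supp z_step.
have /boolp.choice[F FP] : forall i, exists F,
    norming F (z i) /\ forall u, g (z i) * F u <= `|z i| * g u.
  by move=> i; have [F ? ?] := z_supp i; exists F.
(* Testing the functional norming z (i+1) on z (i+2) only loses a second
   difference of the norms along the chain, so the losses telescope. *)
pose gap i := `|z i.+2| - F i.+1 (z i.+2).
pose dnorm i := `|z i.+1| - `|z i|.
have gap_ge0 i : 0 <= gap i by rewrite subr_ge0; have [[]] := FP i.+1.
have gap_le i : (i < n)%N -> gap i <= dnorm i.+1 - dnorm i + 2 * rho.
  by move=> lt_in; apply: norming_gap_le (FP i.+1).1 (z_step _ lt_in) (z_step _ (ltnW lt_in)).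
have step_le i : (i <= n)%N -> `|z i.+1 - z i| <= `|D| + rho.
  move=> le_in; have := ler_normD (z i.+1 - z i - D) D; rewrite subrK.
  have := z_step i le_in; lra.
have sum_gap : \sum_(i < n) gap i <= 2 * (`|D| + n.+1%:R * rho).
  apply: (@le_trans _ _ (\sum_(i < n) (dnorm i.+1 - dnorm i + 2 * rho))).
    by apply: ler_sum => i _; apply: gap_le.
  rewrite big_split /= sumr_const card_ord -(big_mkord xpredT (fun i => dnorm i.+1 - dnorm i)).
  rewrite telescope_sumr // /dnorm -mulr_natr -natr1.
  have /ler_normlP[_ dn_le] := ler_dist_dist (z n.+1) (z n).
  have /ler_normlP[d0_ge _] := ler_dist_dist (z 1%N) (z 0%N).
  have := step_le n (leqnn n); have := step_le 0%N (leq0n n); lra.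
have m_z i : (i <= n)%N -> 0 < `|z i.+1| by move=> le_in; apply: lt_le_trans (m_le _ _).
have h_ge0 i : 0 <= g (z i) / `|z i| by rewrite divr_ge0.
have q_ge0 i : 0 <= gap i / m by rewrite divr_ge0 // ltW.
have h_step i : (i < n)%N ->
    g (z i.+1) / `|z i.+1| * (1 - gap i / m) <= g (z i.+2) / `|z i.+2|.
  move=> lt_in; apply: ratio_step (FP i.+1).1 (FP i.+1).2 _ m_gt0 (m_le _ _) => //.
  exact: m_z (ltnW lt_in).
apply: le_trans (chain_lower_bound (fun i => h_ge0 i.+1) q_ge0 h_step).
by apply: ler_wpM2l => //; rewrite lerB // -mulr_suml ler_wpM2r // invr_ge0 ltW.
Qed.

End NormingFunctional.

Lemma shadow_segment_bounds {R : realType} {X : normedModType R}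
    (a b : X) (m eta : R) (n : nat) (z : nat -> X) :
  (forall t, 0 <= t -> t <= 1 -> m <= `|a + t *: (b - a)|) -> (0 < n)%N ->
  `|n%:R^-1 *: (b - a)| <= m / 4 -> eta <= m / 4 ->
  (forall i, `|a + (i%:R - 1) *: (n%:R^-1 *: (b - a)) - z i| < eta) ->
  (forall i, (i <= n.+1)%N -> m / 2 <= `|z i|) /\
  (forall i, `|z i.+1 - z i - n%:R^-1 *: (b - a)| <= 2 * eta).
Proof.
set D := n%:R^-1 *: (b - a); set y := fun i : nat => a + (i%:R - 1) *: D.
move=> seg n_gt0 D_le eta_m z_near.
have yS i : y i.+1 - y i = D.
  by rewrite /y -natr1 addrK opprD addrACA subrr add0r -scalerBl opprB addrC subrK scale1r.
have z_ge i : `|y i| - eta <= `|z i|.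
  have := ler_normD (y i - z i) (z i); rewrite subrK; have := z_near i; lra.
split=> [[|i] le_in|i].
- have := z_ge 0%N; rewrite /y sub0r scaleN1r.
  have := ler_normD (a - D) D; rewrite subrK.
  have := seg 0 (lexx _) ler01; rewrite scale0r addr0; lra.
- have n_gt0' : 0 < n%:R :> R by rewrite ltr0n.
  have := z_ge i.+1; rewrite /y -natr1 addrK.
  have -> : i%:R *: D = (i%:R / n%:R) *: (b - a) by rewrite /D scalerA.
  have := seg (i%:R / n%:R) (divr_ge0 (ler0n _ _) (ltW n_gt0')).
  rewrite ler_pdivrMr // mul1r ler_nat => /(_ le_in).
  have := normr_ge0 (z i.+1); lra.
- have shift (p q r s : X) : q - p - (s - r) = (q - s) - (p - r).
    by rewrite !opprB addrACA [RHS]addrACA [- s + _]addrC.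
  rewrite -(yS i) shift; apply: le_trans (ler_normB _ _) _.
  rewrite -!(distrC (y _)); have := z_near i; have := z_near i.+1; lra.
Qed.

Section RatioOnSegment.
Context {R : realType} {X : normedModType R} (g : X -> R) (S : set X).
Hypothesis S_dense : dense S.
Hypothesis S_supported : forall x, S x -> ratio_supported g x.
Hypothesis g_ge0 : forall u, 0 <= g u.
Hypothesis g_cont : continuous g.

Let h (u : X) := g u / `|u|.

Lemma ratio_continuous_at (a : X) : a != 0 -> forall e : R, 0 < e ->
  exists2 d : R, 0 < d & forall u, `|a - u| < d -> `|h a - h u| < e.
Proof.
move=> a_neq0 e e_gt0.
have h_cvg : h u @[u --> a] --> h a.
  apply: cvgM; first exact: g_cont.
  by apply: cvgV; [rewrite normr_eq0 | exact: norm_continuous].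
have [d d_gt0 near_a] := (nbhs_normP _ _).1 ((cvgrPdist_lt _ _).1 h_cvg e e_gt0).
by exists d => // u au; exact: near_a.
Qed.

Lemma segment_chain_approx (a b : X) (m c delta : R) :
  0 < m -> 0 < c -> 0 < delta ->
  (forall t, 0 <= t -> t <= 1 -> m <= `|a + t *: (b - a)|) ->
  exists a' b', [/\ `|a - a'| < delta, `|b - b'| < delta & h a' * (1 - c) <= h b'].
Proof.
move=> m_gt0 c_gt0 delta_gt0 seg.
have m4_gt0 : 0 < m / 4 by rewrite divr_gt0.
have cm8_gt0 : 0 < c * m / 8 by rewrite divr_gt0 ?mulr_gt0.
have [k k_gt0 [k_m k_c _]] := exists_pos_le3 m4_gt0 cm8_gt0 m4_gt0.
pose n := (Num.Def.archi_bound (`|b - a| / k)).+1.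
have n_gt0 : 0 < n%:R :> R by rewrite ltr0n.
pose D := n%:R^-1 *: (b - a).
have D_le : `|D| <= k.
  rewrite normrZ ger0_norm ?invr_ge0 ?ler0n // mulrC ler_pdivrMr // mulrC -ler_pdivrMr //.
  apply: ltW; apply: lt_le_trans (archi_boundP _) _; first by rewrite divr_ge0 // ltW.
  by rewrite ler_nat.
have cmn_gt0 : 0 < c * m / (16 * n.+1%:R) by rewrite divr_gt0 ?mulr_gt0 // ltr0n.
have [eta eta_gt0 [eta_delta eta_m eta_c]] := exists_pos_le3 delta_gt0 m4_gt0 cmn_gt0.
(* y 0 = a - D is an extra node before a: the first step needs a predecessor. *)
pose y i := a + (i%:R - 1) *: D.
have /boolp.choice[z zP] : forall i, exists z, S z /\ `|y i - z| < eta.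
  by move=> i; exact: dense_approx.
have [z_m z_step] := shadow_segment_bounds seg (ltn0Sn _) (le_trans D_le k_m) eta_m
  (fun i => (zP i).2).
have := ratio_chain g_ge0 (divr_gt0 m_gt0 (ltr0n _ 2)) z_m
  (fun i => S_supported (zP i).1) (fun i _ => z_step i).
rewrite -/n -/D -/(h _) -/(h _) => chain.
have y1 : y 1%N = a by rewrite /y subrr scale0r addr0.
have yn : y n.+1 = b.
  by rewrite /y -natr1 addrK /D scalerA mulfV ?gt_eqF // scale1r addrC subrK.
exists (z 1%N), (z n.+1); split; first by rewrite -{1}y1; have := (zP 1%N).2; lra.
  by rewrite -{1}yn; have := (zP n.+1).2; lra.
apply: le_trans chain; apply: ler_wpM2l; first by rewrite /h divr_ge0.
rewrite lerB // ler_pdivrMr ?divr_gt0 //.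
have : eta * (16 * n.+1%:R) <= c * m by rewrite -ler_pdivlMr ?mulr_gt0 ?ltr0n.
lra.
Qed.

Lemma ratio_le_on_segment (a b : X) (m : R) : 0 < m ->
  (forall t, 0 <= t -> t <= 1 -> m <= `|a + t *: (b - a)|) -> h a <= h b.
Proof.
move=> m_gt0 seg.
have a_ge : m <= `|a| by have := seg 0 (lexx _) ler01; rewrite scale0r addr0.
have b_ge : m <= `|b| by have := seg 1 ler01 (lexx _); rewrite scale1r addrC subrK.
have a_neq0 : a != 0 by rewrite -normr_gt0 (lt_le_trans m_gt0 a_ge).
have b_neq0 : b != 0 by rewrite -normr_gt0 (lt_le_trans m_gt0 b_ge).
have ha_ge0 : 0 <= h a by rewrite /h divr_ge0.
have weak c : 0 < c -> c <= 1 -> h a * (1 - c) <= h b.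
  move=> c_gt0 c_le1; apply/ler_addgt0Pr => e e_gt0.
  have e2_gt0 : 0 < e / 2 by rewrite divr_gt0.
  have [da da_gt0 near_a] := ratio_continuous_at a_neq0 e2_gt0.
  have [db db_gt0 near_b] := ratio_continuous_at b_neq0 e2_gt0.
  have [d d_gt0 [d_a d_b _]] := exists_pos_le3 da_gt0 db_gt0 da_gt0.
  have [a' [b' [aa' bb' chain]]] := segment_chain_approx m_gt0 c_gt0 d_gt0 seg.
  have /ltr_normlP[_ ha'] := near_a a' (lt_le_trans aa' d_a).
  have /ltr_normlP[hb' _] := near_b b' (lt_le_trans bb' d_b).
  have := ler_wpM2r (_ : 0 <= 1 - c) (ltW ha'); rewrite subr_ge0 => /(_ c_le1).
  have : 0 <= e / 2 * c by rewrite mulr_ge0 // ltW.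
  lra.
apply/ler_addgt0Pr => e e_gt0.
have e_ha_gt0 : 0 < e / (h a + 1) by rewrite divr_gt0 //; lra.
have [c c_gt0 [c_le1 c_e _]] := exists_pos_le3 ltr01 e_ha_gt0 ltr01.
rewrite ler_pdivlMr in c_e; last by lra.
have := weak c c_gt0 c_le1; lra.
Qed.

Lemma ratio_le : (forall (c : R) u, g (c *: u) = `|c| * g u) ->
  forall a b : X, a != 0 -> b != 0 -> h a <= h b.
Proof.
move=> g_hom a b a_neq0 b_neq0.
have [[t [t_ge0 t_le1 seg0]]|seg_neq0] :=
  boolp.pselect (exists t : R, [/\ 0 <= t, t <= 1 & a + t *: (b - a) = 0]).
  have t_neq0 : t != 0 by apply: contra_eq_neq seg0 => ->; rewrite scale0r addr0.
  pose c := - (t^-1 * (1 - t)).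
  have bca : b = c *: a.
    apply: (scalerI t_neq0); rewrite /c scalerA mulrN mulrA mulfV // mul1r.
    apply/eqP; rewrite -subr_eq0 -seg0 scalerBr scaleNr opprK scalerBl scale1r.
    by rewrite addrCA.
  have c_neq0 : c != 0 by apply: contra_neq b_neq0 => c0; rewrite bca c0 scale0r.
  by rewrite /h bca g_hom normrZ -mulf_div divff ?normr_eq0 // mul1r.
pose phi := fun t : R => `|a + t *: (b - a)|.
have phi_cont : {within `[0, 1], continuous phi}.
  apply: continuous_subspaceT => t.
  apply: (@continuous_comp _ _ _ (fun t : R => a + t *: (b - a)) (fun v : X => `|v|)).
    by apply: cvgD; [exact: cvg_cst | exact: scalel_continuous].
  exact: norm_continuous.
have [t0 t0_in t0_min] := EVT_min ler01 phi_cont.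
have phi_gt0 : 0 < phi t0.
  rewrite normr_gt0; apply/negP => /eqP seg0; apply: seg_neq0; exists t0.
  by move: t0_in; rewrite in_itv /= => /andP[].
apply: (ratio_le_on_segment phi_gt0) => t t_ge0 t_le1.
by apply: t0_min; rewrite in_itv /= t_ge0 t_le1.
Qed.

End RatioOnSegment.

Section SupportAtSmoothPoints.
Context {R : realType} {X : normedModType R}.

(* [sup] of an unbounded set is 0, so [dual_norm f = 1] already forces [f] to be
   bounded. *)
Lemma dual_norm1_le (f : X -> R) : is_linear_functional f -> dual_norm f = 1 ->
  forall u, f u <= `|u|.
Proof.
move=> f_lin f_norm u.
have [->|u_neq0] := eqVneq u 0; first by rewrite (linear_functional0 f_lin) normr0.
have u_gt0 : 0 < `|u| by rewrite normr_gt0.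
have [_ f_ub] : has_sup [set `|f x| | x in [set x : X | `|x| <= 1]].
  apply: boolp.contrapT => no_sup; move: f_norm.
  by rewrite /dual_norm sup_out // => /eqP; rewrite eq_sym oner_eq0.
have : `|f (`|u|^-1 *: u)| <= 1.
  rewrite -f_norm; apply: (ub_le_sup f_ub); exists (`|u|^-1 *: u) => //=.
  by rewrite normrZ normfV normr_id mulVf ?gt_eqF.
rewrite (linear_functionalZ f_lin) normrM normfV normr_id.
rewrite mulrC -ler_pdivlMr ?invr_gt0 // invrK mul1r.
by apply: le_trans; exact: ler_norm.
Qed.

Lemma smooth_norming (x : X) : Sm x -> exists f, norming f x.
Proof.
move=> [_ [f Jx]]; have [[f_lin _] [f_norm fx]] : Jset x f by rewrite Jx.
by exists f; split => //; exact: dual_norm1_le.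
Qed.

Lemma norming_ker_BJorth (f : X -> R) (x v : X) : norming f x -> f v = 0 -> BJorth x v.
Proof.
move=> [f_lin f_le fx] fv lam.
by have := f_le (lam *: v + x); rewrite f_lin fv mulr0 add0r fx addrC.
Qed.

Lemma norming_ratio_supported (T : {linear X -> X}) (f : X -> R) (x : X) :
  norming f x -> preserves_BJ_at T x -> forall u, `|T x| * f u <= `|x| * `|T u|.
Proof.
move=> f_norming T_pres u; have [f_lin _ fx] := f_norming.
have [->|x_neq0] := eqVneq x 0; first by rewrite linear0 normr0 !mul0r.
have x_gt0 : 0 < `|x| by rewrite normr_gt0.
(* u = al x + v with f v = 0, so x is BJ-orthogonal to v; test T x against
   T v with the scalar 1 / al. *)
pose al := f u / `|x|.
have fu : f u = al * `|x| by rewrite /al divfK ?gt_eqF.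
have [al0|al_neq0] := eqVneq al 0.
  by rewrite fu al0 mul0r mulr0 mulr_ge0.
pose v := u - al *: x.
have Tu : T u = al *: T x + T v by rewrite /v linearB linearZ /= addrC subrK.
have fv : f v = 0 by rewrite /v addrC -scaleNr f_lin fx mulNr fu addNr.
have := T_pres v (norming_ker_BJorth f_norming fv) al^-1.
have -> : T x + al^-1 *: T v = al^-1 *: T u.
  by rewrite Tu scalerDr scalerA mulVf // scale1r.
rewrite normrZ normfV mulrC ler_pdivlMr ?normr_gt0 // => le_Tu.
rewrite fu mulrA [_ * `|T u|]mulrC ler_pM2r //.
by apply: le_trans le_Tu; rewrite ler_wpM2l // ler_norm.
Qed.

End SupportAtSmoothPoints.

Theorem mainTheorem6 (R : realType) (X : completeNormedModType R) :
  dense (@Sm R X) -> Gdelta (@Sm R X) ->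
  forall T : {linear X -> X}, continuous T ->
  (forall x : X, Sm x -> preserves_BJ_at T x) ->
  exists2 lam : R, 0 <= lam & forall x : X, `|T x| = lam * `|x|.
Proof.
move=> Sm_dense _ T T_cont T_pres.
pose g u := `|T u|.
have g_cont : continuous g.
  by move=> x; apply: continuous_comp; [exact: T_cont | exact: norm_continuous].
have g_hom c u : g (c *: u) = `|c| * g u by rewrite /g linearZ normrZ.
have Sm_supported x : Sm x -> ratio_supported g x.
  move=> Sm_x; have [f f_norming] := smooth_norming Sm_x.
  by exists f => //; exact: norming_ratio_supported (T_pres x Sm_x).
have ratio_eq a b : a != 0 -> b != 0 -> g a / `|a| = g b / `|b|.
  move=> a_neq0 b_neq0; apply/eqP; rewrite eq_le.
  by rewrite !(ratio_le Sm_dense Sm_supported (fun u => normr_ge0 _) g_cont g_hom).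
have [[x0 x0_neq0]|X_trivial] := boolp.pselect (exists x0 : X, x0 != 0).
  exists (g x0 / `|x0|); first exact: divr_ge0 (normr_ge0 _) (normr_ge0 _).
  move=> x; have [->|x_neq0] := eqVneq x 0; first by rewrite linear0 normr0 mulr0.
  by rewrite -(ratio_eq x) // divfK // normr_eq0.
exists 0 => // x; have [->|x_neq0] := eqVneq x 0; first by rewrite linear0 normr0 mulr0.
by case: X_trivial; exists x.
Qed.
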